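(* Let $(x_k)_{k\ge0}$ be indeterminates, define $a_n=x_n$ if $n=2^k-1$ for some integer $k\ge0$ and $a_n=0$ otherwise, let $D(n)=\det\left(a_{i+j+1}\right)_{i,j=0}^{n-1}$ with $D(0)=1$, and let $T_n=\frac{D(n)D(n+2)}{D(n+1)^2}$ (in the field of rational functions). Then for all integers $k\ge1$, $n\ge0$ and $j\in\{0,1\}$, $$T_{2^{k+1}n+2^k-2+j}=(-1)^nT_{2^k-2+j}.$$
   Context: Each $D(n)$ is a nonzero polynomial, so $T_n$ is well defined. *)

From HB Require Import structures.
From mathcomp Require Import all_boot all_order all_algebra.
From mathcomp Require Import fraction.
From mathcomp Require Import mpoly.
Set Implicit Arguments. Unset Strict Implicit. Unset Printing Implicit Defensive.
Import GRing.Theory.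
Local Open Scope ring_scope.

(* n is of the form 2^k - 1 for some k >= 0 (k is necessarily <= n+1). *)
Definition is_pow2m1 (n : nat) : bool := [exists k : 'I_n.+2, n.+1 == (2 ^ k)%N].

Definition PolyN (N : nat) := {mpoly rat[N]}.

(* a_m = x_m if m = 2^k - 1 (and m < N so that x_m is available), else 0. *)
Definition aseq (N m : nat) : {mpoly rat[N]} :=
  if is_pow2m1 m then
    (match insub m : option 'I_N with Some i => 'X_i | None => 0 end)
  else 0.

Definition Dhank (N n : nat) : {mpoly rat[N]} :=
  \det (\matrix_(i < n, j < n) aseq N (i + j + 1)).

Definition Tq (N n : nat) : {fraction {mpoly rat[N]}} :=
  (tofrac (Dhank N n) * tofrac (Dhank N n.+2)) / (tofrac (Dhank N n.+1) ^+ 2).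

(* If
   2q + L + 1 = 2^m, every nonvanishing term of the Leibniz expansion of
   D(q + L) maps the last L rows onto the antidiagonal i + j = 2^m - 2, whose
   entries all equal x_(2^m - 1); hence
     D(q + L) = (-1)^C(L,2) x_(2^m - 1)^L D(q),
   and in particular every D(n) is nonzero.  Plugging this into T shows that
   T_A = T_B whenever A + B + 3 = 2^M and A >= B + 2, and T_(B+1) = -T_B when
   2B + 4 = 2^M.  The first identity with 2^M = 2^(k+1) 2^t, where 2^t is the
   least power of two above n, reflects the index 2^(k+1) n + 2^k - 2 + j to
   one with a smaller n' of opposite parity and with j replaced by 1 - j; so
   induction on n and the second identity give the sign (-1)^n. *)

From mathcomp Require Import all_boot all_order all_algebra.
From mathcomp Require Import fraction mpoly.
From mathcomp Require Import fingroup perm zify ring.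

Set Implicit Arguments.
Unset Strict Implicit.
Unset Printing Implicit Defensive.

Import GRing.Theory.
Local Open Scope ring_scope.

Definition corner_or_antidiag q m (i j : nat) : bool :=
  ((i < q) && (j < q) || (i + j + 2 == 2 ^ m))%N.

Lemma perm_pow2_support q L m (s : 'S_(q + L)) :
  (2 * q + L + 1 = 2 ^ m)%N ->
  (forall i : 'I_(q + L), exists e, (i + s i + 2 = 2 ^ e)%N) ->
  forall i : 'I_(q + L), corner_or_antidiag q m i (s i).
Proof.
move=> qLm s_pow2.
have at_top (u v : 'I_(q + L)) :
    (exists e, (u + v + 2 = 2 ^ e)%N) -> (2 ^ m < 2 * (u + v + 2))%N ->
    (u + v + 2 = 2 ^ m)%N.
  case=> e uv_e; rewrite uv_e -expnS ltn_exp2l // => me.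
  have : (2 ^ e < 2 ^ m.+1)%N.
    by rewrite -uv_e expnS; have := ltn_ord u; have := ltn_ord v; lia.
  by rewrite ltn_exp2l // => em; congr (2 ^ _)%N; lia.
have reflect_top (i : 'I_(q + L)) : (q <= i)%N -> (i + s i + 2 = 2 ^ m)%N.
  move=> qi; have i_lt := ltn_ord i.
  have [i_big | i_small] := ltnP (2 ^ m) (2 * (i + 2)).
    by apply: at_top (s_pow2 i) _; lia.
  (* Otherwise column [2^m - 2 - i] is large: its row lies on the antidiagonal. *)
  have j_lt : (2 ^ m - 2 - i < q + L)%N by lia.
  pose j := Ordinal j_lt; pose i' := (s^-1)%g j.
  have i'j : (i' + j + 2 = 2 ^ m)%N.
    by apply: at_top; [have := s_pow2 i'; rewrite permKV | rewrite /=; lia].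
  have -> : i = i' by apply/val_inj; move: i'j => /=; lia.
  by rewrite permKV.
move=> i; rewrite /corner_or_antidiag.
have [qi | iq] := leqP q i; first by rewrite reflect_top ?eqxx ?orbT.
apply/orP; left; rewrite /= ltnNge; apply/negP => q_si.
have si_lt := ltn_ord (s i).
have j_lt : (2 ^ m - 2 - s i < q + L)%N by lia.
pose j := Ordinal j_lt.
have q_j : (q <= j)%N by rewrite /=; lia.
have /perm_inj/(congr1 val) /= : s j = s i.
  by apply/val_inj; have := reflect_top j q_j; rewrite /=; lia.
lia.
Qed.

Definition antidiag_mx (R : nzRingType) L (c : R) : 'M[R]_L :=
  \matrix_(i < L, j < L) if ((i + j).+1 == L)%N then c else 0.

Lemma det_antidiag_mx (R : comNzRingType) L (c : R) :
  \det (antidiag_mx L c) = (-1) ^+ 'C(L, 2) * c ^+ L.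
Proof.
elim: L => [|L IH]; first by rewrite det_mx00 bin0n !expr0 mulr1.
rewrite (expand_det_row _ ord0) (bigD1 ord_max) //= big1 => [|j j_max]; last first.
  rewrite mxE /= add0n eqSS; case: eqP => [j_L|]; last by rewrite mul0r.
  by case/eqP: j_max; apply/val_inj.
rewrite addr0 mxE /= add0n eqxx /cofactor /= add0n.
have -> : row' ord0 (col' ord_max (antidiag_mx L.+1 c)) = antidiag_mx L c.
  apply/matrixP => i j; rewrite !mxE /=.
  by rewrite /bump leq0n (leqNgt L j) (ltn_ord j) /= add1n add0n addSn eqSS.
rewrite IH binS bin1 exprD exprS; ring.
Qed.

Section SparseHankel.

Variables (R : comNzRingType) (a : nat -> R).

Definition hankel_mx n : 'M[R]_n := \matrix_(i < n, j < n) a (i + j + 1).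

Hypothesis a_supp : forall t, a t != 0 -> exists e, t.+1 = (2 ^ e)%N.

Variables q L m : nat.
Hypothesis qLm : (2 * q + L + 1 = 2 ^ m)%N.

Lemma block_hankel_antidiagE (i j : 'I_(q + L)) :
  block_mx (hankel_mx q) 0 0 (antidiag_mx L (a (2 ^ m).-1)) i j =
  if corner_or_antidiag q m i j then hankel_mx (q + L) i j else 0.
Proof.
rewrite /corner_or_antidiag.
case: (split_ordP i) => i1 ->; case: (split_ordP j) => j1 ->;
  rewrite ?(block_mxEul, block_mxEur, block_mxEdl, block_mxEdr) !mxE /=.
- by [].
- by case: eqP => //; have := ltn_ord i1; have := ltn_ord j1; lia.
- by case: eqP => //; have := ltn_ord i1; have := ltn_ord j1; lia.
- have -> : (q + i1 + (q + j1) + 2 == 2 ^ m)%N = ((i1 + j1).+1 == L)%N.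
    by apply/eqP/eqP; lia.
  by case: eqP => // ?; congr a; lia.
Qed.

Lemma det_hankel_block :
  \det (hankel_mx (q + L)) =
  \det (block_mx (hankel_mx q) 0 0 (antidiag_mx L (a (2 ^ m).-1))).
Proof.
apply: eq_bigr => s _; congr (_ * _).
case: (boolP [forall i : 'I_(q + L), corner_or_antidiag q m i (s i)]).
  by move/forallP => supp; apply: eq_bigr => i _; rewrite block_hankel_antidiagE supp.
case/forallPn => i0 not_supp.
rewrite [RHS](bigD1 i0) //= block_hankel_antidiagE (negbTE not_supp) mul0r.
case: (boolP [forall i, hankel_mx (q + L) i (s i) != 0]) => [/forallP nz|].
  have s_pow2 (i : 'I_(q + L)) : exists e, (i + s i + 2 = 2 ^ e)%N.
    by have := nz i; rewrite mxE => /a_supp [e e_def]; exists e; lia.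
  by have := perm_pow2_support qLm s_pow2 i0; rewrite (negbTE not_supp).
by case/forallPn => i1; rewrite negbK => /eqP z; rewrite (bigD1 i1) //= z mul0r.
Qed.

Lemma det_hankel_rec :
  \det (hankel_mx (q + L)) =
  (-1) ^+ 'C(L, 2) * a (2 ^ m).-1 ^+ L * \det (hankel_mx q).
Proof. by rewrite det_hankel_block det_ublock det_antidiag_mx mulrC. Qed.

End SparseHankel.

Lemma mpolyX_neq0 n (i : 'I_n) : ('X_i : {mpoly rat[n]}) != 0.
Proof.
apply/eqP => /(congr1 (mcoeff U_(i))).
by rewrite mcoeffX eqxx mcoeff0 => /eqP; rewrite oner_eq0.
Qed.

Lemma aseq_supp N t : aseq N t != 0 -> exists e, t.+1 = (2 ^ e)%N.
Proof.
by rewrite /aseq; case: ifP => [/existsP [e /eqP ->] _|]; [exists e | rewrite eqxx].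
Qed.

Lemma aseq_pow2_neq0 N m : (2 ^ m <= N)%N -> aseq N (2 ^ m).-1 != 0.
Proof.
move=> mN; have pos : (0 < 2 ^ m)%N by rewrite expn_gt0.
rewrite /aseq.
have -> : is_pow2m1 (2 ^ m).-1.
  have m_lt : (m < (2 ^ m).-1.+2)%N by rewrite prednK // ltnS ltnW // ltn_expl.
  by apply/existsP; exists (Ordinal m_lt); rewrite /= prednK.
by rewrite insubT ?prednK // => ?; apply: mpolyX_neq0.
Qed.

Lemma Dhank_rec N q L m : (2 * q + L + 1 = 2 ^ m)%N ->
  Dhank N (q + L) = (-1) ^+ 'C(L, 2) * aseq N (2 ^ m).-1 ^+ L * Dhank N q.
Proof.
by move=> qLm; rewrite /Dhank -!/(hankel_mx _ _) (det_hankel_rec (@aseq_supp N) qLm).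
Qed.

Lemma Dhank_neq0 N n : (2 * n <= N)%N -> Dhank N n != 0.
Proof.
elim/ltn_ind: n => -[_ _|n IH nN]; first by rewrite /Dhank det_mx00 oner_neq0.
pose t := trunc_log 2 n.+1.
have lo : (2 ^ t <= n.+1)%N by apply: trunc_logP.
have hi : (n.+1 < 2 * 2 ^ t)%N by rewrite -expnS; apply: trunc_log_ltn.
pose q := (2 * 2 ^ t - n.+2)%N.
have -> : n.+1 = (q + (n.+1 - q))%N by lia.
rewrite (@Dhank_rec N q _ t.+1); last by rewrite expnS; lia.
rewrite !mulf_neq0 ?signr_eq0 ?expf_neq0 ?aseq_pow2_neq0 ?IH //; rewrite ?expnS; lia.
Qed.

Lemma tofrac_Dhank_rec N q L m : (2 * q + L + 1 = 2 ^ m)%N ->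
  tofrac (Dhank N (q + L)) =
  (-1) ^+ 'C(L, 2) * tofrac (aseq N (2 ^ m).-1) ^+ L * tofrac (Dhank N q).
Proof. by move=> qLm; rewrite (Dhank_rec N qLm) !rmorphM !rmorphXn rmorphN1. Qed.

Lemma signr_bin2SS (R : pzRingType) L : (-1) ^+ 'C(L.+2, 2) = - (-1) ^+ 'C(L, 2) :> R.
Proof.
rewrite !binS bin0 !bin1 addn1 -addnA addnS exprD exprS exprD -expr2 sqrr_sign.
by rewrite mulr1 mulrN1.
Qed.

Section HankelRatio.

Variables (F : fieldType) (d : nat -> F) (M : nat) (Y : F).
Hypothesis Y_neq0 : Y != 0.
Hypothesis d_rec : forall q L, (2 * q + L + 1 = 2 ^ M)%N ->
  d (q + L) = (-1) ^+ 'C(L, 2) * Y ^+ L * d q.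

Definition Tratio n := d n * d n.+2 / d n.+1 ^+ 2.

Lemma Tratio_reflect A B : (A + B + 3 = 2 ^ M)%N -> (B.+2 <= A)%N -> d B.+1 != 0 ->
  Tratio A = Tratio B.
Proof.
move=> ABM BA dB_neq0; pose L := (A - B.+2)%N.
have [A0 A1 A2] : [/\ A = B.+2 + L, A.+1 = B.+1 + L.+2 & A.+2 = B + L.+4]%N.
  by rewrite /L; split; lia.
rewrite /Tratio A2 A1 A0 !d_rec ?signr_bin2SS ?opprK; try by rewrite /L; lia.
have s_neq0 : (-1) ^+ 'C(L, 2) != 0 :> F by rewrite signr_eq0.
have Z_neq0 := expf_neq0 L Y_neq0.
rewrite !exprS; field.
by rewrite dB_neq0 Y_neq0 Z_neq0 oppr_eq0 s_neq0.
Qed.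

Lemma Tratio_center B : (2 * B + 4 = 2 ^ M)%N -> d B.+1 != 0 ->
  Tratio B.+1 = - Tratio B.
Proof.
move=> BM dB_neq0.
have d2 : d B.+2 = Y * d B.+1.
  by rewrite -addn1 d_rec ?expr1; [rewrite bin_small // expr0 mul1r | lia].
have d3 : d B.+3 = - (Y ^+ 3 * d B).
  by rewrite -addn3 d_rec; [rewrite -signr_odd /= expr1 -mulrA mulN1r | lia].
rewrite /Tratio d2 d3; field.
by rewrite dB_neq0 Y_neq0.
Qed.

End HankelRatio.

Lemma Tq_reflect N M A B : (2 ^ M <= N)%N -> (A + B + 3 = 2 ^ M)%N -> (B.+2 <= A)%N ->
  Tq N A = Tq N B.
Proof.
move=> MN ABM BA; apply: (Tratio_reflect _ (fun q L => @tofrac_Dhank_rec N q L M)) => //.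
  by rewrite tofrac_eq0 aseq_pow2_neq0.
by rewrite tofrac_eq0 Dhank_neq0 //; lia.
Qed.

Lemma Tq_center N M B : (2 ^ M <= N)%N -> (2 * B + 4 = 2 ^ M)%N ->
  Tq N B.+1 = - Tq N B.
Proof.
move=> MN BM; apply: (Tratio_center _ (fun q L => @tofrac_Dhank_rec N q L M)) => //.
  by rewrite tofrac_eq0 aseq_pow2_neq0.
by rewrite tofrac_eq0 Dhank_neq0 //; lia.
Qed.

Lemma Tq_center_residue N k j : (1 <= k)%N -> (j <= 1)%N -> (2 ^ k.+1 <= N)%N ->
  Tq N (2 ^ k - 2 + (1 - j)) = - Tq N (2 ^ k - 2 + j).
Proof.
move=> k1 j1 kN; have k2 : (2 <= 2 ^ k)%N by rewrite -{1}(expn1 2) leq_exp2l.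
have center := @Tq_center N k.+1 (2 ^ k - 2).
case: j j1 => [|[|//]] _; rewrite ?subn0 ?subnn addn0 addn1 center ?opprK //;
  rewrite expnS; lia.
Qed.

Lemma Tq_reflect_residue N k t n n' j : (1 <= k)%N -> (j <= 1)%N ->
  (n + n'.+1 = 2 ^ t)%N -> (n' < n)%N -> (2 ^ (k.+1 + t) <= N)%N ->
  Tq N (2 ^ k.+1 * n + 2 ^ k - 2 + j) = Tq N (2 ^ k.+1 * n' + 2 ^ k - 2 + (1 - j)).
Proof.
move=> k1 j1 nn't n'n tN; have k2 : (2 <= 2 ^ k)%N by rewrite -{1}(expn1 2) leq_exp2l.
apply: (Tq_reflect tN); rewrite ?expnD -?nn't expnS; nia.
Qed.

Theorem theorem5p6 (k n j N : nat) :
  (1 <= k)%N -> (j <= 1)%N -> (2 ^ k.+2 * n.+1 <= N)%N ->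
  Tq N (2 ^ k.+1 * n + 2 ^ k - 2 + j)%N = (-1) ^+ n * Tq N (2 ^ k - 2 + j)%N.
Proof.
move=> k1; elim/ltn_ind: n j => -[|m] IH j j1 mN; first by rewrite muln0 add0n mul1r.
pose t := (trunc_log 2 m.+1).+1; pose m' := (2 ^ t - m.+2)%N.
have lo : (2 ^ t <= 2 * m.+1)%N by rewrite expnS leq_mul2l trunc_logP.
have hi : (m.+1 < 2 ^ t)%N by apply: trunc_log_ltn.
have m'm : (m' < m.+1)%N by rewrite /m'; lia.
have sum_t : (m.+1 + m'.+1 = 2 ^ t)%N by rewrite /m'; lia.
move: mN; rewrite (expnS _ k.+1) => mN.
have tN : (2 ^ (k.+1 + t) <= N)%N by rewrite expnD; nia.
have m'N : (2 ^ k.+2 * m'.+1 <= N)%N by rewrite expnS; nia.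
have kN : (2 ^ k.+1 <= N)%N by nia.
rewrite (Tq_reflect_residue k1 j1 sum_t m'm tN) IH ?leq_subr // Tq_center_residue //.
have parity : odd m'.+1 = odd m.+1.
  by move: (congr1 odd sum_t); rewrite oddD /t expnS oddM; do 2!case: odd.
by rewrite mulrN -mulN1r mulrA -exprS -signr_odd parity signr_odd.
Qed.
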